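(* For all integers $n\geqslant2$ and $s\geqslant2$, every subset of cardinality $n-1$ of the family of events $\{A_{n,s,1},\dots,A_{n,s,n}\}$ is mutually independent, where $A_{n,s,i}$ is the event, defined in the context, that the $i$-th fluid flows from the centre to the boundary.
   Context: Consider the tiling of the plane by regular hexagons of side $1$, called cells. For an integer $s\geqslant2$, fix a cell $O$. Let $M_s$ be the set of all cells lying inside the regular hexagon that is centred at the centre of $O$, has sides of length $s\sqrt3$, and has its sides perpendicular to sides of the cells. The set $M_s$ has $m+1=1+3s(s-1)$ cells. Number the cells other than $O$ as $v_1,\dots,v_m$. Two cells are neighbours if they share a side. A cell of $M_s$ is a boundary cell if it has fewer than six neighbours in $M_s$. For an integer $n\geqslant2$, let $\Omega_{n,s}$ be the set of $n$-tuples $f=(f_1,\dots,f_n)$ of functions $f_i:\{v_1,\dots,v_m\}\to\{0,1\}$ such that $f_1+\dots+f_n\equiv1\pmod 2$ at every cell. Equip $\Omega_{n,s}$ with the uniform probability measure $P(A)=|A|\,2^{-(n-1)m}$. A path from the centre to the boundary is a sequence of pairwise distinct cells $v_{j_1},\dots,v_{j_t}$ with the following properties: - $v_{j_1}$ is a neighbour of $O$; - $v_{j_l}$ and $v_{j_{l+1}}$ are neighbours for each $l$; - $v_{j_t}$ is a boundary cell. The $i$-th fluid flows from the centre to the boundary for $f$ if there is such a path with $f_i(v_{j_l})=1$ for all $l$. Let $A_{n,s,i}\subset\Omega_{n,s}$ be this event. *)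

From mathcomp Require Import all_boot all_order all_algebra.
From mathcomp Require Import boolp.
Set Implicit Arguments. Unset Strict Implicit. Unset Printing Implicit Defensive.
Import Order.TTheory GRing.Theory Num.Theory.

(* Cells of the hexagonal tiling are identified with their centres, given in
   axial coordinates (q, r) in Z^2 of the triangular lattice of cell centres;
   the centre of O is (0,0). *)

Definition hex_nbr (a b : int * int) : bool :=
  ((b.1 - a.1)%R, (b.2 - a.2)%R) \in
    [:: (1%:Z%R, 0%:Z%R); ((-1)%R, 0%:Z%R); (0%:Z%R, 1%:Z%R); (0%:Z%R, (-1)%R);
        (1%:Z%R, (-1)%R); ((-1)%R, 1%:Z%R)].

(* hexagonal (graph) distance from the centre O *)
Definition hex_norm (a : int * int) : nat :=
  maxn `|a.1|%N (maxn `|a.2|%N `|(a.1 + a.2)%R|%N).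

(* A finite window of the lattice containing M_s: indices 0..2s-2, shifted. *)
Definition grid (s : nat) := ('I_(2 * s - 1) * 'I_(2 * s - 1))%type.

Definition coord (s : nat) (c : grid s) : int * int :=
  ((c.1 : nat)%:Z%R - (s - 1)%:Z%R, (c.2 : nat)%:Z%R - (s - 1)%:Z%R)%R.

(* c lies in M_s (cells inside the hexagon of side s*sqrt 3 centred at O):
   hexagonal distance at most s-1 from O; there are 1 + 3s(s-1) of them. *)
Definition inM (s : nat) (c : grid s) : bool := hex_norm (coord c) <= s - 1.

Definition isO (s : nat) (c : grid s) : bool := coord c == (0%R, 0%R).

Definition inV (s : nat) (c : grid s) : bool := inM c && ~~ isO c.

Definition Vcell (s : nat) := {c : grid s | inV c}.

Definition m_of (s : nat) : nat := #|{: Vcell s}|.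

Definition vnbr (s : nat) (v w : Vcell s) : bool := hex_nbr (coord (val v)) (coord (val w)).

Definition nbr_of_O (s : nat) (v : Vcell s) : bool := hex_nbr (0%R, 0%R) (coord (val v)).

Definition boundary (s : nat) (v : Vcell s) : bool :=
  #|[set c : grid s | inM c && hex_nbr (coord (val v)) (coord c)]| < 6.

Definition config (n s : nat) := {ffun 'I_n -> {ffun Vcell s -> bool}}.

Definition in_Omega (n s : nat) (f : config n s) : bool :=
  [forall v : Vcell s, odd (\sum_(i < n) (f i v : nat))].

Definition Omega (n s : nat) := {f : config n s | in_Omega f}.

Definition Pr (n s : nat) (A : {set Omega n s}) : rat :=
  ((#|A|)%:R / (2 ^ ((n - 1) * m_of s))%:R)%R.

Definition flows (n s : nat) (i : 'I_n) (f : config n s) : Prop :=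
  exists (v0 : Vcell s) (p : seq (Vcell s)),
    [/\ uniq (v0 :: p), nbr_of_O v0, path (@vnbr s) v0 p,
        boundary (last v0 p) & all (fun v => f i v) (v0 :: p)].

Definition A_event (n s : nat) (i : 'I_n) : {set Omega n s} :=
  [set f : Omega n s | `[< flows i (val f) >]].

Definition mutually_independent (n s : nat) (J : {set 'I_n}) : Prop :=
  forall K : {set 'I_n}, K \subset J ->
    Pr (\bigcap_(i in K) A_event s i) = (\prod_(i in K) Pr (A_event s i))%R.

From mathcomp Require Import all_boot all_order all_algebra.
From mathcomp Require Import boolp zify.
Set Implicit Arguments. Unset Strict Implicit. Unset Printing Implicit Defensive.
Import Order.TTheory GRing.Theory Num.Theory.

(* Fix a fluid j outside J.  Since f_j is forced by the parity constraint,
   forgetting the j-th component is a bijection from Omega onto the set of all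
   (n-1)-tuples of colourings indexed by the other fluids; it carries the
   uniform measure to the product of the uniform measures, and each event A_i
   depends only on the i-th colouring. *)

Section CoordinateEvents.
Variables n s : nat.

Notation colouring := {ffun Vcell s -> bool}.

Definition coord_event (i : 'I_n) (Q : pred colouring) : {set Omega n s} :=
  [set f : Omega n s | Q (val f i)].

Definition colouring_prob (Q : pred colouring) : rat :=
  ((#|Q|)%:R / (2 ^ m_of s)%:R)%R.

Lemma card_colouring : #|{: colouring}| = 2 ^ m_of s.
Proof. by rewrite card_ffun card_bool. Qed.

Section ForgetFluid.
Variable j : 'I_n.

Definition others_sum (g : config n s) (v : Vcell s) : nat :=
  \sum_(i < n | i != j) (g i v : nat).

Lemma Omega_parity (f : Omega n s) v : val f j v = ~~ odd (others_sum (val f) v).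
Proof.
have := forallP (valP f) v.
by rewrite (bigD1 j) //= oddD oddb; case: (val f j v); case: odd.
Qed.

Definition forget_fluid (f : Omega n s) : config n s :=
  [ffun i => if i == j then [ffun=> false] else val f i].

Definition restore_fluid (g : config n s) : config n s :=
  [ffun i => if i == j then [ffun v => ~~ odd (others_sum g v)] else g i].

Lemma forget_fluid_inj : injective forget_fluid.
Proof.
move=> f g fg; apply: val_inj.
have others_eq i : i != j -> val f i = val g i.
  by move=> ij; have := congr1 (fun h : config n s => h i) fg; rewrite !ffunE (negbTE ij).
apply/ffunP => i; have [->|/others_eq//] := eqVneq i j.
apply/ffunP => v; rewrite !Omega_parity; congr (~~ odd _).
by apply: eq_bigr => k /others_eq ->.
Qed.

Lemma restore_fluid_in_Omega g : in_Omega (restore_fluid g).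
Proof.
apply/forallP => v; rewrite (bigD1 j) //= oddD !ffunE eqxx ffunE oddb.
have -> : \sum_(i < n | i != j) (restore_fluid g i v : nat) = others_sum g v.
  by apply: eq_bigr => i ij; rewrite ffunE (negbTE ij).
by case: odd.
Qed.

Lemma forget_restore_fluid (g : config n s) : g j = [ffun=> false] ->
  forget_fluid (exist _ (restore_fluid g) (restore_fluid_in_Omega g)) = g.
Proof. by move=> gj; apply/ffunP => i; rewrite !ffunE /=; case: eqP => // ->. Qed.

Lemma card_Omega_constrained (Q : 'I_n -> pred colouring) :
  #|[set f : Omega n s | [forall (i | i != j), Q i (val f i)]]| =
  \prod_(i | i != j) #|Q i|.
Proof.
pose F i : pred colouring := if i == j then pred1 [ffun=> false] : pred _ else Q i.
have -> : \prod_(i | i != j) #|Q i| = #|family F|.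
  rewrite card_family foldrE big_map big_enum (bigD1 j) //= /F eqxx card1 mul1n.
  by apply: eq_bigr => i /negbTE ->.
rewrite -(card_in_imset (f := forget_fluid)); last by move=> ? ? _ _ /forget_fluid_inj.
apply: eq_card => g; apply/imsetP/familyP => [[f] | gF].
- rewrite inE => /forall_inP fQ -> i; rewrite ffunE /F.
  by case: ifP => [_ | ij]; [rewrite inE | apply: fQ; rewrite ij].
- have gj : g j = [ffun=> false] by apply/eqP; have := gF j; rewrite /F eqxx.
  exists (exist _ (restore_fluid g) (restore_fluid_in_Omega g)); last first.
    by rewrite forget_restore_fluid.
  rewrite inE; apply/forall_inP => i ij /=; rewrite ffunE (negbTE ij).
  by have := gF i; rewrite /F (negbTE ij).
Qed.

End ForgetFluid.

Lemma Pr_bigcap_coord_event (P : 'I_n -> pred colouring) (j : 'I_n) (K : {set 'I_n}) :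
  j \notin K ->
  Pr (\bigcap_(i in K) coord_event i (P i)) = (\prod_(i in K) colouring_prob (P i))%R.
Proof.
move=> jK.
pose Q i : pred colouring := if i \in K then P i else predT.
have -> : \bigcap_(i in K) coord_event i (P i) =
          [set f : Omega n s | [forall (i | i != j), Q i (val f i)]].
  apply/setP => f; rewrite inE; apply/bigcapP/forall_inP => [fP i ij | fQ i iK].
  - by rewrite /Q; case: ifP => // /fP; rewrite inE.
  - have ij : i != j by apply: contraNneq jK => <-.
    by rewrite inE; have := fQ i ij; rewrite /Q iK.
rewrite /Pr card_Omega_constrained.
have -> : (2 ^ ((n - 1) * m_of s))%N = \prod_(i < n | i != j) 2 ^ m_of s.
  by rewrite prod_nat_const cardC1 card_ord -expnM mulnC subn1.
rewrite !natr_prod -prodf_div.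
rewrite (eq_bigr (fun i => if i \in K then colouring_prob (P i) else 1%R)); last first.
  move=> i _; rewrite /Q; case: ifP => // _.
  by rewrite /predT /= card_colouring divff // pnatr_eq0 expn_eq0.
rewrite -big_mkcondr; apply: eq_bigl => i.
by apply/andb_idl; apply: contraTneq => ->.
Qed.

End CoordinateEvents.

Definition fluid_flows (s : nat) (g : {ffun Vcell s -> bool}) : bool :=
  `[< exists (v0 : Vcell s) (p : seq (Vcell s)),
      [/\ uniq (v0 :: p), nbr_of_O v0, path (@vnbr s) v0 p,
          boundary (last v0 p) & all g (v0 :: p)] >].

Lemma A_eventE (n s : nat) (i : 'I_n) :
  A_event s i = coord_event i (@fluid_flows s).
Proof. by apply/setP => f; rewrite !inE. Qed.

Theorem lemma1 (n s : nat) (hn : 2 <= n) (hs : 2 <= s) :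
  forall J : {set 'I_n}, #|J| = n - 1 -> mutually_independent s J.
Proof.
move=> J cardJ K KJ.
have : 0 < #|~: J| by have := cardsC J; rewrite card_ord cardJ; lia.
rewrite card_gt0 => /set0Pn [j]; rewrite inE => jJ.
have jK : j \notin K by apply: contra jJ; apply: (subsetP KJ).
under eq_bigr do rewrite A_eventE.
rewrite (Pr_bigcap_coord_event _ jK); apply: eq_bigr => i iK.
have ji : j \notin [set i] by rewrite in_set1; apply: contraNneq jK => ->.
by have := Pr_bigcap_coord_event (fun=> @fluid_flows s) ji; rewrite !big_set1 A_eventE.
Qed.
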